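(* Let $\mathcal X=\{X_1,\dots,X_n\}$, $n\in\mathbb N$, be a multi-set of real symmetric $2\times2$ matrices, let $\lambda_1$ be (one of) the largest eigenvalue(s) of all these matrices, attained by $X_1$ with normalised eigenvector $u_1$, and let $v_1\perp u_1$ be a normalised vector. Let $\mathcal V^{\lambda_1}_{\sup}(\mathcal X)$ be the set of unit vectors $v$ such that $Xv=\lambda_1v$ for some $X\in\mathcal X$. Then $$\mathrm{Sup}_{\mathrm{LE}}(\mathcal X)=\begin{cases}\lambda_1I,&\text{if }\lambda_1\text{ is not unique and there is }v\in\mathcal V^{\lambda_1}_{\sup}(\mathcal X)\text{ with }v\neq\pm u_1,\\ \lambda_1u_1u_1^{\mathsf T}+\mu_*v_1v_1^{\mathsf T},&\text{otherwise,}\end{cases}$$ where $\mu_*\le\lambda_1$ is the largest eigenvalue of $\mathcal X$ (other than the occurrence $\lambda_1$ of $X_1$) whose associated eigenvector is not aligned with $u_1$.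
   Context: $I$ is the $2\times2$ identity. Every real symmetric $2\times2$ matrix $X_i$ is written in spectral form $X_i=\lambda_i u_iu_i^{\mathsf T}+\mu_i v_iv_i^{\mathsf T}$ with $\lambda_i\ge\mu_i$ and orthonormal $u_i,v_i$. ''The eigenvalues of $\mathcal X$'' means the multi-set of all $2n$ numbers $\lambda_1,\mu_1,\dots,\lambda_n,\mu_n$, each with its associated eigenvector; an eigenvalue is unique if it occurs exactly once in this multi-set. Two unit vectors are aligned if they are equal up to sign. The log-exp-supremum is $\mathrm{Sup}_{\mathrm{LE}}(\mathcal X):=\lim_{m\to\infty}\frac1m\log\sum_{i=1}^n\exp(mX_i)$ (matrix exponential and logarithm). *)

From HB Require Import structures.
From mathcomp Require Import all_boot all_order all_algebra.
From mathcomp Require Import all_classical all_reals all_analysis.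
Set Implicit Arguments. Unset Strict Implicit. Unset Printing Implicit Defensive.
Import Order.TTheory GRing.Theory Num.Theory.
Import numFieldNormedType.Exports.
Local Open Scope ring_scope.
Local Open Scope classical_set_scope.

Section Defs.
Variable R : realType.

Definition expm (A : 'M[R]_2) : 'M[R]_2 :=
  limn (series (fun k : nat => (k`!%:R)^-1 *: A ^+ k)).

(* matrix logarithm: the (unique) real symmetric L with exp L = A
   (defined for symmetric positive definite A; junk value 0 otherwise) *)
Definition logm (A : 'M[R]_2) : 'M[R]_2 :=
  xget 0 [set L : 'M[R]_2 | L^T = L /\ expm L = A].

Definition unitv (x : 'cV[R]_2) : Prop := (x^T *m x) = 1.

Definition aligned (x y : 'cV[R]_2) : bool := (x == y) || (x == - y).

(* the multiset of the 2n eigenvalues: index (i, true) is lambda_i with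
   eigenvector u_i, index (i, false) is mu_i with eigenvector v_i *)
Definition eig_val n (lam mu : 'I_n -> R) (k : 'I_n * bool) : R :=
  if k.2 then lam k.1 else mu k.1.
Definition eig_vec n (u v : 'I_n -> 'cV[R]_2) (k : 'I_n * bool) : 'cV[R]_2 :=
  if k.2 then u k.1 else v k.1.

Definition unique_eig n (lam mu : 'I_n -> R) (a : R) : bool :=
  #|[set k | eig_val lam mu k == a]| == 1%N.

(* mu_* : the largest eigenvalue of the multiset, other than the occurrence
   (i0, true) (i.e. lambda of X_1), whose eigenvector is not aligned with u_{i0};
   the occurrence (i0,false) (mu of X_1, eigenvector v_1 orthogonal to u_1)
   always belongs to this set, so it is used as the neutral start value. *)
Definition mu_star n (lam mu : 'I_n -> R) (u v : 'I_n -> 'cV[R]_2) (i0 : 'I_n) : R :=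
  \big[Num.max/mu i0]_(k | (k != (i0, true)) && ~~ aligned (eig_vec u v k) (u i0))
     eig_val lam mu k.

Definition Vsup n (X : 'I_n -> 'M[R]_2) (a : R) : set 'cV[R]_2 :=
  [set w | unitv w /\ exists i, X i *m w = a *: w].

(* the sequence (1/m) log sum_i exp(m X_i) whose limit is Sup_LE *)
Definition supLE_seq n (X : 'I_n -> 'M[R]_2) (m : nat) : 'M[R]_2 :=
  (m%:R)^-1 *: logm (\sum_i expm (m%:R *: X i)).

End Defs.

From HB Require Import structures.
From mathcomp Require Import all_boot all_order all_algebra.
From mathcomp Require Import all_classical all_reals all_analysis.
From mathcomp Require Import ring lra.
Import Order.TTheory GRing.Theory Num.Theory.
Import numFieldNormedType.Exports.
Set Implicit Arguments. Unset Strict Implicit. Unset Printing Implicit Defensive.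
Local Open Scope ring_scope.
Local Open Scope classical_set_scope.

(** Write [A m = \sum_i expm (m X_i)] as [\sum_k e^(m t_k) y_k y_k^T] over the
    2n eigenpairs [(t_k, y_k)], and let [alpha m >= beta m] be its eigenvalues,
    with eigenprojections [P m] and [1 - P m].  The trace of [A m] lies between
    [e^(m lam1)] and [2n e^(m lam1)], and by Cauchy-Binet
    [2 det (A m) = \sum_(k,l) e^(m (t_k + t_l)) (cross2 y_k y_l)^2], which is of exact
    order [e^(m (lam1 + mu_* ))]: pairs of eigenvectors both aligned with [u1] do not
    contribute, and the pair ([u1], an eigenvector for [mu_*]) does.  Hence
    [ln (alpha m) / m -> lam1] and [ln (beta m) / m -> mu_*], and
    [log (A m) / m = (ln (alpha m) / m) P m + (ln (beta m) / m) (1 - P m)].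
    The first case is exactly [mu_* = lam1]; both rates then agree and the limit
    is [lam1 I] whatever [P m] does.  Otherwise [alpha m - beta m >= e^(m lam1) / 4]
    eventually, while the entries of [A m] off the [u1 u1^T] block are
    [O(e^(m mu_* ))]; so [P m] tends to [u1 u1^T] geometrically fast. *)

(** * Two-by-two matrices *)

Section TwoByTwo.
Variable R : comNzRingType.
Implicit Types (A B L : 'M[R]_2) (x y : 'cV[R]_2).

Lemma ord2P (i : 'I_2) : i = 0 \/ i = 1.
Proof. by case: i => [[|[|//]] Hi]; [left|right]; apply: val_inj. Qed.

Lemma sum_ord2 (F : 'I_2 -> R) : \sum_(i < 2) F i = F 0 + F 1.
Proof. by rewrite big_ord_recl big_ord1; congr (F _ + F _); apply: val_inj. Qed.

Lemma eq_mx2 A B : A 0 0 = B 0 0 -> A 0 1 = B 0 1 -> A 1 0 = B 1 0 ->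
  A 1 1 = B 1 1 -> A = B.
Proof.
move=> e00 e01 e10 e11; apply/matrixP => i j.
by case: (ord2P i) => ->; case: (ord2P j) => ->.
Qed.

Lemma eq_cv2 x y : x 0 0 = y 0 0 -> x 1 0 = y 1 0 -> x = y.
Proof.
by move=> e0 e1; apply/matrixP => i j; rewrite (ord1 j); case: (ord2P i) => ->.
Qed.

Lemma mulmx2E m n (A : 'M[R]_(m, 2)) (B : 'M[R]_(2, n)) i j :
  (A *m B) i j = A i 0 * B 0 j + A i 1 * B 1 j.
Proof. by rewrite mxE sum_ord2. Qed.

Lemma mul_col_trmxE x y i j : (x *m y^T) i j = x i 0 * y j 0.
Proof. by rewrite mxE big_ord1 mxE. Qed.

Lemma mxtrace2 A : \tr A = A 0 0 + A 1 1.
Proof. by rewrite /mxtrace sum_ord2. Qed.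

Lemma det_mx2 A : \det A = A 0 0 * A 1 1 - A 0 1 * A 1 0.
Proof.
rewrite (expand_det_row _ 0) big_ord_recl big_ord1 /cofactor !det_mx11 !mxE /=.
rewrite expr0 expr1 mul1r mulN1r mulrN.
by congr (_ * A _ _ - A _ _ * A _ _); apply: val_inj.
Qed.

Lemma mx2_cayley_hamilton L : L * L - \tr L *: L + (\det L)%:M = 0.
Proof.
by apply: eq_mx2; rewrite mxtrace2 det_mx2 !mxE !sum_ord2 /=; ring.
Qed.

Lemma mx2_mul_sub_scalar L a b :
  (L - b%:M) * (L - a%:M) = L * L - (a + b) *: L + (a * b)%:M.
Proof. by apply: eq_mx2; rewrite !mxE !sum_ord2 !mxE /=; ring. Qed.

Lemma mx2_root_factor L a b : a + b = \tr L -> a * b = \det L ->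
  (L - b%:M) * (L - a%:M) = 0.
Proof. by move=> hs hp; rewrite mx2_mul_sub_scalar hs hp mx2_cayley_hamilton. Qed.
Definition cross2 (x z : 'cV[R]_2) : R := x 0 0 * z 1 0 - x 1 0 * z 0 0.

Lemma cross2DZl (a b : R) x z t :
  cross2 (a *: x + b *: z) t = a * cross2 x t + b * cross2 z t.
Proof. by rewrite /cross2 !mxE; ring. Qed.

End TwoByTwo.

Section OuterSum.
Variables (R : comNzRingType) (K : finType) (c : K -> R) (y : K -> 'cV[R]_2).

Definition outer_sum : 'M[R]_2 := \sum_k c k *: (y k *m (y k)^T).

Lemma outer_sum_tr : outer_sum^T = outer_sum.
Proof.
by rewrite /outer_sum linear_sum; apply: eq_bigr => k _; rewrite linearZ /= trmx_mul trmxK.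
Qed.

Lemma outer_sumE i j : outer_sum i j = \sum_k c k * (y k i 0 * y k j 0).
Proof. by rewrite /outer_sum summxE; apply: eq_bigr => k _; rewrite mxE mul_col_trmxE. Qed.

Lemma mxtrace_outer_sum : \tr outer_sum = \sum_k c k * ((y k)^T *m y k) 0 0.
Proof.
rewrite /outer_sum raddf_sum /=; apply: eq_bigr => k _.
by rewrite mxtraceZ mxtrace_mulC trace_mx11.
Qed.

(* Cauchy-Binet *)
Lemma det_outer_sum :
  \det outer_sum *+ 2 = \sum_k \sum_l c k * c l * cross2 (y k) (y l) ^+ 2.
Proof.
pose f k l := c k * c l * (y k 0 0 ^+ 2 * y l 1 0 ^+ 2
                           - y k 0 0 * y k 1 0 * (y l 0 0 * y l 1 0)).
have E1 : \det outer_sum = \sum_k \sum_l f k l.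
  rewrite det_mx2 !outer_sumE !big_distrlr -sumrB; apply: eq_bigr => k _.
  by rewrite -sumrB; apply: eq_bigr => l _; rewrite /f /=; ring.
have E2 : \det outer_sum = \sum_k \sum_l f l k by rewrite E1 exchange_big.
rewrite mulr2n {1}E1 E2 -big_split /=; apply: eq_bigr => k _.
by rewrite -big_split /=; apply: eq_bigr => l _; rewrite /f /cross2; ring.
Qed.
End OuterSum.

(** * Spectral calculus *)

Section SpectralCalculus.
Variables (R : fieldType) (A : algType R).
Implicit Types (a b : R) (P L : A).

Definition spectral2 a b P : A := a *: P + b *: (1 - P).

Lemma scale_spectral2 c a b P : c *: spectral2 a b P = spectral2 (c * a) (c * b) P.
Proof. by rewrite /spectral2 scalerDr !scalerA. Qed.

Section Idempotent.
Variable P : A.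
Hypothesis PP : P * P = P.

Lemma idem_mulC : P * (1 - P) = 0.
Proof. by rewrite mulrBr mulr1 PP subrr. Qed.

Lemma idemC_mul : (1 - P) * P = 0.
Proof. by rewrite mulrBl mul1r PP subrr. Qed.

Lemma idemC : (1 - P) * (1 - P) = 1 - P.
Proof. by rewrite mulrBl mul1r idem_mulC subr0. Qed.

Lemma idem_mul_spectral2 a b : P * spectral2 a b P = a *: P.
Proof. by rewrite mulrDr -!scalerAr PP idem_mulC scaler0 addr0. Qed.

Lemma idemC_mul_spectral2 a b : (1 - P) * spectral2 a b P = b *: (1 - P).
Proof. by rewrite mulrDr -!scalerAr idemC_mul idemC scaler0 add0r. Qed.

Lemma spectral2_mul_idem a b : spectral2 a b P * P = a *: P.
Proof. by rewrite mulrDl -!scalerAl PP idemC_mul scaler0 addr0. Qed.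

Lemma spectral2_mul_idemC a b : spectral2 a b P * (1 - P) = b *: (1 - P).
Proof. by rewrite mulrDl -!scalerAl idem_mulC idemC scaler0 add0r. Qed.

Lemma spectral2X a b k : spectral2 a b P ^+ k = spectral2 (a ^+ k) (b ^+ k) P.
Proof.
elim: k => [|k IHk]; first by rewrite /spectral2 !expr0 !scale1r addrC subrK.
rewrite exprS IHk {1}/spectral2 mulrDl -!scalerAl idem_mul_spectral2.
by rewrite idemC_mul_spectral2 !scalerA -!exprS.
Qed.
End Idempotent.

Lemma scale_fun_eq (g : R -> R) a b (M : A) : a *: M = b *: M -> g a *: M = g b *: M.
Proof.
have [->//|neq_ab] := eqVneq a b.
move=> /eqP; rewrite -subr_eq0 -scalerBl scaler_eq0 subr_eq0 (negbTE neq_ab) /=.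
by move=> /eqP ->; rewrite !scaler0.
Qed.

(* The functional calculus is well defined. *)
Lemma spectral2_fun (g : R -> R) a b a' b' P P' :
  P * P = P -> P' * P' = P' -> spectral2 a b P = spectral2 a' b' P' ->
  spectral2 (g a) (g b) P = spectral2 (g a') (g b') P'.
Proof.
move=> PP PP' E.
have block x y (S T : A) : S * spectral2 a b P = x *: S ->
    spectral2 a' b' P' * T = y *: T -> g x *: (S * T) = g y *: (S * T).
  move=> hS hT; apply: scale_fun_eq.
  by rewrite scalerAl -hS -mulrA E hT scalerAr.
have splitr (S : A) : S = S * P' + S * (1 - P') by rewrite -mulrDr addrC subrK mulr1.
have splitl (T : A) : T = P * T + (1 - P) * T by rewrite -mulrDl addrC subrK mul1r.
have -> : spectral2 (g a) (g b) P = g a *: (P * P') + g a *: (P * (1 - P'))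
    + (g b *: ((1 - P) * P') + g b *: ((1 - P) * (1 - P'))).
  by rewrite -!scalerDr -!splitr.
have -> : spectral2 (g a') (g b') P' = g a' *: (P * P') + g a' *: ((1 - P) * P')
    + (g b' *: (P * (1 - P')) + g b' *: ((1 - P) * (1 - P'))).
  by rewrite -!scalerDr -!splitl.
rewrite (block a a') ?idem_mul_spectral2 ?spectral2_mul_idem //.
rewrite (block a b') ?idem_mul_spectral2 ?spectral2_mul_idemC //.
rewrite (block b a') ?idemC_mul_spectral2 ?spectral2_mul_idem //.
rewrite (block b b') ?idemC_mul_spectral2 ?spectral2_mul_idemC //.
by rewrite addrACA.
Qed.

Lemma spectral2_root_factor L a b : a != b -> (L - b%:A) * (L - a%:A) = 0 ->
  let P := (a - b)^-1 *: (L - b%:A) in P * P = P /\ L = spectral2 a b P.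
Proof.
move=> neq_ab CH P; have nz_ab : a - b != 0 by rewrite subr_eq0.
have shift : L - b%:A = (L - a%:A) + (a - b)%:A by rewrite scalerBl addrA subrK.
split.
  rewrite /P -scalerAl -scalerAr scalerA {2}shift mulrDr CH add0r.
  by rewrite mulr_algr scalerA mulrAC mulVf // mul1r.
rewrite /spectral2 scalerBr addrCA -scalerBl /P scalerA mulfV // scale1r.
by rewrite addrC subrK.
Qed.
End SpectralCalculus.

Lemma spectral2_tr (R : fieldType) n (a b : R) (P : 'M[R]_n.+1) :
  P^T = P -> (spectral2 a b P)^T = spectral2 a b P.
Proof. by move=> PT; rewrite /spectral2 linearD /= !linearZ /= linearB /= trmx1 PT. Qed.

Section SymmetricSpectral.
Variable R : rcfType.

Lemma sym_mx2_spectral (L : 'M[R]_2) : L^T = L -> exists a b (P : 'M[R]_2),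
  [/\ P * P = P, P^T = P, \tr P = 1, L = spectral2 a b P &
      [/\ a + b = \tr L, a * b = \det L & b <= a]].
Proof.
move=> LT; have L10 : L 1 0 = L 0 1 by rewrite -[in LHS]LT mxE.
pose h := (L 0 0 - L 1 1) / 2; pose s := Num.sqrt (h ^+ 2 + L 0 1 ^+ 2).
pose a := (L 0 0 + L 1 1) / 2 + s; pose b := (L 0 0 + L 1 1) / 2 - s.
have s_ge0 : 0 <= s by rewrite sqrtr_ge0.
have s2 : s ^+ 2 = h ^+ 2 + L 0 1 ^+ 2 by rewrite sqr_sqrtr // addr_ge0 ?sqr_ge0.
have hs : a + b = \tr L by rewrite mxtrace2 /a /b; field.
have hp : a * b = \det L.
  rewrite det_mx2 L10; transitivity (((L 0 0 + L 1 1) / 2) ^+ 2 - s ^+ 2).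
    by rewrite /a /b; ring.
  by rewrite s2 /h; field.
have ba : b <= a by rewrite lerD2l; lra.
have [s0|s_neq0] := eqVneq s 0.
  have [h0 q0] : h = 0 /\ L 0 1 = 0.
    by move: s2; rewrite s0 expr0n /= => /esym E; split; nra.
  (* [L] is scalar: any rank-one projection will do. *)
  exists a, b, (delta_mx 0 0); split => //.
  - by rewrite -mulmxE mul_delta_mx.
  - by rewrite trmx_delta.
  - by rewrite mxtrace2 !mxE eqxx oner_eq0 addr0.
  - have -> : b = a by rewrite /a /b s0 subr0 addr0.
    rewrite /spectral2 -scalerDr addrC subrK scalemx1 /a s0 addr0.
    apply: eq_mx2; rewrite !mxE ?eqxx ?oner_eq0 ?L10 ?q0 /=; rewrite /h in h0; lra.
have neq_ab : a != b.
  by rewrite -subr_eq0 (_ : a - b = s *+ 2) ?mulrn_eq0 // /a /b; ring.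
have CH : (L - b%:A) * (L - a%:A) = 0.
  by have := mx2_root_factor hs hp; rewrite -[b%:M]scalemx1 -[a%:M]scalemx1.
have [PP EL] := spectral2_root_factor neq_ab CH.
rewrite -[b%:A]/(b *: 1%:M) scalemx1 in PP EL; set P := _ *: _ in PP EL.
exists a, b, P; split => //.
- apply/matrixP => i j; rewrite !mxE eq_sym; congr (_ * (_ - _)).
  by rewrite -[in RHS]LT mxE.
- have trLb : \tr (L - b%:M) = \tr L - b *+ 2.
    by rewrite !mxtrace2 !mxE !eqxx /=; ring.
  rewrite /P mxtraceZ trLb -hs (_ : a + b - b *+ 2 = a - b); last by ring.
  by rewrite mulVf // subr_eq0.
Qed.
End SymmetricSpectral.

Section ExpLog.
Variable R : realType.
Implicit Types (a b : R) (P : 'M[R]_2).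

Lemma expm_spectral2 a b P : P * P = P ->
  expm (spectral2 a b P) = spectral2 (expR a) (expR b) P.
Proof.
move=> PP; rewrite /expm.
have -> : series (fun k => (k`!%:R)^-1 *: spectral2 a b P ^+ k) =
    (fun N => spectral2 (series (exp_coeff a) N) (series (exp_coeff b) N) P).
  apply/funext => N; rewrite /series /= /spectral2.
  under eq_bigr do rewrite spectral2X // /spectral2 scalerDr !scalerA.
  rewrite big_split /= -!scaler_suml; congr (_ *: _ + _ *: _);
  by apply: eq_bigr => k _; rewrite /exp_coeff /= mulrC.
apply: cvg_lim => //; apply: cvgD; apply: cvgZr_tmp; exact: is_cvg_series_exp_coeff.
Qed.

Lemma logm_spectral2 a b P : P * P = P -> P^T = P -> 0 < a -> 0 < b ->
  logm (spectral2 a b P) = spectral2 (ln a) (ln b) P.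
Proof.
move=> PP PT a_gt0 b_gt0.
set S := [set L : 'M[R]_2 | L^T = L /\ expm L = spectral2 a b P].
have S_ln : S (spectral2 (ln a) (ln b) P).
  split; first exact: spectral2_tr.
  by rewrite expm_spectral2 // !lnK.
have [LT expL] := xgetI 0 S_ln; rewrite /logm -/S.
move: LT expL; set L := xget 0 S => LT expL.
have [a' [b' [P' [PP' _ _ EL _]]]] := sym_mx2_spectral LT.
rewrite EL expm_spectral2 // in expL; rewrite EL.
by have := spectral2_fun (@ln R) PP' PP expL; rewrite !expRK.
Qed.
End ExpLog.

(** * Asymptotics *)

Section Asymptotics.
Variable R : realType.
Implicit Types (x y t : nat -> R).

Lemma cvg_invn : (fun m : nat => (m%:R : R)^-1) @ \oo --> 0.
Proof.
apply/(gtr0_cvgV0 (f := fun m : nat => (m%:R : R))); last exact: cvgr_idn.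
by near=> m; rewrite ltr0n; near: m; exists 1%N.
Unshelve. all: end_near. Qed.

Lemma cvg_ln_rate x th K1 K2 : 0 < K1 ->
  (forall m, K1 * expR (m%:R * th) <= x m <= K2 * expR (m%:R * th)) ->
  (fun m => (m%:R)^-1 * ln (x m)) @ \oo --> th.
Proof.
move=> K1_gt0 x_bounds.
have K2_gt0 : 0 < K2.
  have /andP[lo up] := x_bounds 0%N; rewrite mul0r expR0 !mulr1 in lo up.
  exact: lt_le_trans K1_gt0 (le_trans lo up).
have cvg_K K : (fun m : nat => th + (m%:R)^-1 * ln K) @ \oo --> th.
  rewrite -[X in _ --> X]addr0; apply: cvgD; first exact: cvg_cst.
  by rewrite -(mul0r (ln K)); apply: cvgMr_tmp; exact: cvg_invn.
apply: (squeeze_cvgr _ (cvg_K K1) (cvg_K K2)); near=> m.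
have m_gt0 : (0 : R) < m%:R by rewrite ltr0n; near: m; exists 1%N.
have /andP[lo up] := x_bounds m.
have xm_gt0 : 0 < x m by apply: lt_le_trans lo; rewrite mulr_gt0 ?expR_gt0.
have lnE K : 0 < K -> ln (K * expR (m%:R * th)) = m%:R * (th + (m%:R)^-1 * ln K).
  move=> K_gt0; rewrite lnM ?posrE ?expR_gt0 // expRK mulrDr mulrA divff ?gt_eqF //.
  by rewrite mul1r addrC.
rewrite -(ler_ln _ xm_gt0) ?posrE ?mulr_gt0 ?expR_gt0 // lnE // in lo.
rewrite -(ler_ln xm_gt0) ?posrE ?mulr_gt0 ?expR_gt0 // lnE // in up.
have m_neq0 : (m%:R : R) != 0 by rewrite gt_eqF.
apply/andP; split.
- by rewrite -(mulKf m_neq0 (th + _ * ln K1)) ler_wpM2l // invr_ge0 ltW.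
- by rewrite -(mulKf m_neq0 (th + _ * ln K2)) ler_wpM2l // invr_ge0 ltW.
Unshelve. all: end_near. Qed.

Lemma cvg0_mul_bounded x y : x @ \oo --> 0 -> (forall m, `|y m| <= 1) ->
  (fun m => x m * y m) @ \oo --> 0.
Proof.
move=> x0 y_le1.
have nx0 : (fun m => `|x m|) @ \oo --> (0 : R).
  by have := cvg_norm x0; rewrite normr0; apply.
apply: (@squeeze_cvgr _ _ _ _ (fun m => - `|x m|) (fun m => `|x m|)).
- near=> m; rewrite -ler_norml normrM.
  by rewrite -[X in _ <= X](mulr1 `|x m|); apply: ler_wpM2l.
- by rewrite -oppr0; exact: (cvgN nx0).
- exact: nx0.
Unshelve. all: end_near. Qed.

Lemma cvg_convex_comb x y t (l : R) : x @ \oo --> l -> y @ \oo --> l ->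
  (forall m, 0 <= t m <= 1) -> (fun m => x m * t m + y m * (1 - t m)) @ \oo --> l.
Proof.
move=> xl yl t01.
have -> : (fun m => x m * t m + y m * (1 - t m)) =
    (fun m => l + ((x m - l) * t m + (y m - l) * (1 - t m))).
  by apply/funext => m; ring.
rewrite -[X in _ --> X]addr0 -[X in _ --> l + X]addr0.
have cvg_sub z : z @ \oo --> l -> (fun m => z m - l) @ \oo --> 0.
  by move=> zl; rewrite -(subrr l); apply: cvgB => //; exact: cvg_cst.
apply: cvgD; first exact: cvg_cst.
apply: cvgD; apply: cvg0_mul_bounded; try exact: cvg_sub.
- by move=> m; have /andP[t0 t1] := t01 m; rewrite ger0_norm.
- by move=> m; have /andP[t0 t1] := t01 m; rewrite ger0_norm ?subr_ge0 // lerBlDr lerDl.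
Qed.

Lemma cvg0_geometric_bound x (C r : R) : 0 <= r < 1 ->
  (\forall m \near \oo, `|x m| <= C * r ^+ m) -> x @ \oo --> 0.
Proof.
move=> /andP[r_ge0 r_lt1] x_le.
have Cr0 : (fun m => C * r ^+ m) @ \oo --> 0.
  by rewrite -(mulr0 C); apply: cvgMl_tmp; apply: cvg_expr; rewrite ger0_norm.
apply: (@squeeze_cvgr _ _ _ _ (fun m => - (C * r ^+ m)) (fun m => C * r ^+ m)).
- by near=> m; rewrite -ler_norml; near: m.
- by rewrite -oppr0; exact: cvgN.
- exact: Cr0.
Unshelve. all: end_near. Qed.
End Asymptotics.

(** * Vectors of the plane *)

Lemma orthonormal2_rows (R : realFieldType) (a b c d : R) :
  a ^+ 2 + b ^+ 2 = 1 -> c ^+ 2 + d ^+ 2 = 1 -> a * c + b * d = 0 ->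
  [/\ a ^+ 2 + c ^+ 2 = 1, b ^+ 2 + d ^+ 2 = 1 & a * b + c * d = 0].
Proof.
move=> ab1 cd1 orth; set D := a * d - b * c.
have D2 : D ^+ 2 = 1.
  have -> : D ^+ 2 = (a ^+ 2 + b ^+ 2) * (c ^+ 2 + d ^+ 2) - (a * c + b * d) ^+ 2.
    by rewrite /D; ring.
  by rewrite ab1 cd1 orth; ring.
have aD : a * D = d.
  have -> : a * D = d + (d * (a ^+ 2 + b ^+ 2 - 1) - b * (a * c + b * d)).
    by rewrite /D; ring.
  by rewrite ab1 orth; ring.
have cD : c * D = - b.
  have -> : c * D = - b + (d * (a * c + b * d) - b * (c ^+ 2 + d ^+ 2 - 1)).
    by rewrite /D; ring.
  by rewrite orth cd1; ring.
have acbd : a ^+ 2 + c ^+ 2 = b ^+ 2 + d ^+ 2.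
  have -> : b ^+ 2 + d ^+ 2 = (c * D) ^+ 2 + (a * D) ^+ 2 by rewrite aD cD sqrrN addrC.
  by rewrite !exprMn D2; ring.
split; [lra | lra |].
have -> : a * b + c * d = - a * (c * D) + c * (a * D) by rewrite aD cD; ring.
ring.
Qed.

Section PlaneVectors.
Variable R : realType.
Local Notation V2 := 'cV[R]_2.
Local Notation M2 := 'M[R]_2.
Implicit Types (x y z : V2) (A B Q : M2).

Definition dot x y : R := (x^T *m y) 0 0.

Lemma dotE x y : dot x y = x 0 0 * y 0 0 + x 1 0 * y 1 0.
Proof. by rewrite /dot mulmx2E !mxE. Qed.

Lemma dotC x y : dot x y = dot y x.
Proof. by rewrite !dotE mulrC [x 1 0 * _]mulrC. Qed.

Lemma dotNl x y : dot (- x) y = - dot x y.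
Proof. by rewrite !dotE !mxE; ring. Qed.

Lemma dot_ge0 x : 0 <= dot x x.
Proof. by rewrite dotE -!expr2 addr_ge0 ?sqr_ge0. Qed.

Lemma unitv_dot x : unitv x -> dot x x = 1.
Proof. by rewrite /unitv /dot => ->; rewrite mxE. Qed.

Lemma unitvE x : unitv x -> x 0 0 ^+ 2 + x 1 0 ^+ 2 = 1.
Proof. by move/unitv_dot; rewrite dotE !expr2. Qed.

Lemma orth_dot x y : x^T *m y = 0 -> dot x y = 0.
Proof. by rewrite /dot => ->; rewrite mxE. Qed.

Lemma orth_sym x y : x^T *m y = 0 -> y^T *m x = 0.
Proof. by move=> xy; rewrite -[x]trmxK -trmx_mul xy trmx0. Qed.

Lemma cross2_lagrange x y : unitv x -> unitv y -> cross2 x y ^+ 2 = 1 - dot x y ^+ 2.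
Proof.
move=> /unitvE x1 /unitvE y1; rewrite dotE /cross2.
by rewrite -[1 in RHS]mul1r -{1}x1 -y1; ring.
Qed.

Lemma cross2_sqr_le1 x y : unitv x -> unitv y -> cross2 x y ^+ 2 <= 1.
Proof. by move=> x1 y1; rewrite cross2_lagrange // lerBlDr lerDl sqr_ge0. Qed.

Lemma dot_sqr_le1 x y : unitv x -> unitv y -> dot x y ^+ 2 <= 1.
Proof.
by move=> x1 y1; move: (cross2_lagrange x1 y1) (sqr_ge0 (cross2 x y)); lra.
Qed.

Lemma normr_dot_le1 x y : unitv x -> unitv y -> `|dot x y| <= 1.
Proof.
move=> x1 y1; rewrite -(expr_le1 (n := 2)) ?normr_ge0 //.
by rewrite real_normK ?num_real ?dot_sqr_le1.
Qed.

Lemma aligned_refl x : aligned x x.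
Proof. by rewrite /aligned eqxx. Qed.

Lemma aligned_sym x y : aligned x y -> aligned y x.
Proof. by rewrite /aligned => /orP[]/eqP ->; rewrite ?opprK eqxx ?orbT. Qed.

Lemma aligned_dot x y z : aligned x y -> dot y z = 0 -> dot x z = 0.
Proof. by rewrite /aligned => /orP[]/eqP -> yz; rewrite ?dotNl yz ?oppr0. Qed.

Lemma aligned_cross2 x y : aligned x y -> cross2 x y = 0.
Proof. by rewrite /aligned /cross2 => /orP[]/eqP ->; rewrite ?mxE; ring. Qed.

Lemma aligned2_cross2 x y z : aligned x z -> aligned y z -> cross2 x y = 0.
Proof. by rewrite /aligned /cross2 => /orP[]/eqP -> /orP[]/eqP ->; rewrite ?mxE; ring. Qed.

(* Equality in Cauchy-Schwarz: [x] is then [dot x y *: y] and [dot x y = +-1]. *)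
Lemma cross2_eq0_aligned x y : unitv x -> unitv y -> cross2 x y = 0 -> aligned x y.
Proof.
move=> x1 y1 cr0.
have d2 : dot x y ^+ 2 = 1 by move: (cross2_lagrange x1 y1); rewrite cr0 expr0n /=; lra.
set d := dot x y in d2 *.
have sq0 : (x 0 0 - d * y 0 0) ^+ 2 + (x 1 0 - d * y 1 0) ^+ 2 = 0.
  have -> : (x 0 0 - d * y 0 0) ^+ 2 + (x 1 0 - d * y 1 0) ^+ 2 =
      (x 0 0 ^+ 2 + x 1 0 ^+ 2) - 2 * d * dot x y + d ^+ 2 * (y 0 0 ^+ 2 + y 1 0 ^+ 2).
    by rewrite dotE; ring.
  by rewrite unitvE // unitvE // -/d mulr1 -mulrA -expr2 d2; ring.
move/eqP: sq0; rewrite paddr_eq0 ?sqr_ge0 // !sqrf_eq0.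
move=> /andP[/eqP/subr0_eq e0 /eqP/subr0_eq e1].
have : (d - 1) * (d + 1) = 0 by rewrite -subr_sqr d2 expr1n subrr.
move/eqP; rewrite mulf_eq0 subr_eq0 addr_eq0 /aligned.
case/orP=> /eqP dE; apply/orP; [left|right]; apply/eqP/eq_cv2;
  by rewrite ?mxE ?e0 ?e1 dE ?mulN1r ?mul1r.
Qed.

Lemma outer_idem x : unitv x -> (x *m x^T) * (x *m x^T) = x *m x^T.
Proof. by move=> x1; rewrite -mulmxE mulmxA -(mulmxA x) x1 mulmx1. Qed.

Lemma orthonormal_outer_sum x y : unitv x -> unitv y -> dot x y = 0 ->
  x *m x^T + y *m y^T = 1.
Proof.
move=> /unitvE x1 /unitvE y1; rewrite dotE => xy.
have [r0 r1 r01] := orthonormal2_rows x1 y1 xy.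
apply: eq_mx2; rewrite [LHS]mxE !mul_col_trmxE [RHS]mxE /= -?expr2 //.
by rewrite mulrC [y 1 0 * _]mulrC.
Qed.

Definition bform x A y : R := (x^T *m A *m y) 0 0.

Lemma bformD x A B y : bform x (A + B) y = bform x A y + bform x B y.
Proof. by rewrite /bform mulmxDr mulmxDl mxE. Qed.

Lemma bformZ x c A y : bform x (c *: A) y = c * bform x A y.
Proof. by rewrite /bform -scalemxAr -scalemxAl mxE. Qed.

Lemma bformB x A B y : bform x (A - B) y = bform x A y - bform x B y.
Proof. by rewrite -scaleN1r bformD bformZ mulN1r. Qed.

Lemma bform_sum (I : finType) x (F : I -> M2) y :
  bform x (\sum_i F i) y = \sum_i bform x (F i) y.
Proof.
have bform0 : bform x 0 y = 0 by rewrite /bform mulmx0 mul0mx mxE.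
exact: (big_morph (fun A => bform x A y) (fun A B => bformD x A B y) bform0).
Qed.

Lemma bform1 x y : bform x 1 y = dot x y.
Proof. by rewrite /bform mulmx1. Qed.

Lemma bform_outer x z y : bform x (z *m z^T) y = dot x z * dot z y.
Proof. by rewrite /bform mulmxA -mulmxA mxE big_ord1. Qed.

Lemma bform_spectral2 x a b Q y :
  bform x (spectral2 a b Q) y = a * bform x Q y + b * (dot x y - bform x Q y).
Proof. by rewrite bformD !bformZ bformB bform1. Qed.

Lemma bformC x A y : A^T = A -> bform x A y = bform y A x.
Proof.
move=> AT; rewrite /bform -!mulmxA.
have -> : x^T *m (A *m y) = (y^T *m (A *m x))^T by rewrite !trmx_mul !trmxK AT mulmxA.
by rewrite mxE.
Qed.

Lemma bform_trace x A : bform x A x = \tr (A *m (x *m x^T)).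
Proof. by rewrite /bform -trace_mx11 -mulmxA mxtrace_mulC mulmxA. Qed.

Lemma sym_eigvec_orth (A : 'M[R]_2) x y c d : A^T = A ->
  A *m x = c *: x -> A *m y = d *: y -> (c - d) * dot x y = 0.
Proof.
move=> AT Ax Ay.
have Axy : bform x A y = d * dot x y by rewrite /bform -mulmxA Ay -scalemxAr mxE.
have Ayx : bform y A x = c * dot y x by rewrite /bform -mulmxA Ax -scalemxAr mxE.
by rewrite mulrBl -Axy (bformC _ _ AT) Ayx dotC subrr.
Qed.

Lemma orthonormal_decomp x y z : unitv x -> unitv y -> dot x y = 0 ->
  z = dot x z *: x + dot y z *: y.
Proof.
move=> x1 y1 xy.
have {1}-> : z = (x *m x^T + y *m y^T) *m z by rewrite orthonormal_outer_sum // mul1mx.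
have col_scale t (B : 'M[R]_1) : t *m B = B 0 0 *: t.
  by rewrite {1}[B]mx11_scalar mul_mx_scalar.
by rewrite mulmxDl -!mulmxA !col_scale.
Qed.

Lemma bform_outer_sum (K : finType) (c : K -> R) (y : K -> 'cV[R]_2) x z :
  bform x (outer_sum c y) z = \sum_k c k * (dot x (y k) * dot (y k) z).
Proof. by rewrite bform_sum; apply: eq_bigr => k _; rewrite bformZ bform_outer. Qed.

Lemma mxtrace_outer_sum_unit (K : finType) (c : K -> R) (y : K -> 'cV[R]_2) :
  (forall k, unitv (y k)) -> \tr (outer_sum c y) = \sum_k c k.
Proof.
move=> y1; rewrite mxtrace_outer_sum; apply: eq_bigr => k _.
by rewrite -/(dot _ _) unitv_dot ?mulr1.
Qed.

Section OrthProjection.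
Variable Q : M2.
Hypotheses (QQ : Q * Q = Q) (QT : Q^T = Q).

Lemma bform_orth_proj x y : bform x Q y = dot (Q *m x) (Q *m y).
Proof. by rewrite /dot trmx_mul QT mulmxA -(mulmxA _ Q Q) mulmxE QQ. Qed.

Lemma bform_orth_proj_ge0 x : 0 <= bform x Q x.
Proof. by rewrite bform_orth_proj dot_ge0. Qed.

Lemma bform_orth_proj_cs x y : bform x Q y ^+ 2 <= bform x Q x * bform y Q y.
Proof.
rewrite !bform_orth_proj !dotE.
set a0 := (Q *m x) 0 0; set a1 := (Q *m x) 1 0.
set b0 := (Q *m y) 0 0; set b1 := (Q *m y) 1 0.
have -> : (a0 * a0 + a1 * a1) * (b0 * b0 + b1 * b1) =
    (a0 * b0 + a1 * b1) ^+ 2 + (a0 * b1 - a1 * b0) ^+ 2 by ring.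
by rewrite lerDl sqr_ge0.
Qed.
End OrthProjection.
End PlaneVectors.

Section OrthonormalBasis.
Variables (R : realType) (u w : 'cV[R]_2).
Hypotheses (u1 : unitv u) (w1 : unitv w) (uw : dot u w = 0).

Lemma sym_mx_basisE M : M^T = M -> M = bform u M u *: (u *m u^T)
  + bform u M w *: (u *m w^T + w *m u^T) + bform w M w *: (w *m w^T).
Proof.
move=> MT.
have outer_mid x z : (x *m x^T) *m M *m (z *m z^T) = bform x M z *: (x *m z^T).
  have -> : x *m x^T *m M *m (z *m z^T) = x *m (x^T *m M *m z) *m z^T by rewrite !mulmxA.
  by rewrite [x^T *m M *m z]mx11_scalar mul_mx_scalar -scalemxAl.
have EM : M = (u *m u^T + w *m w^T) *m M *m (u *m u^T + w *m w^T).
  by rewrite orthonormal_outer_sum // mul1mx mulmx1.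
rewrite {1}EM mulmxDl !mulmxDr !mulmxDl !outer_mid (bformC w) // scalerDr.
by rewrite [X in _ = _ + X + _]addrC !addrA.
Qed.

Lemma bform_basis_trace M : bform u M u + bform w M w = \tr M.
Proof.
by rewrite !bform_trace -mxtraceD -mulmxDr orthonormal_outer_sum // mulmx1.
Qed.

Lemma cvg_sym_mx_basis (S : nat -> 'M[R]_2) (p o r : R) : (forall m, (S m)^T = S m) ->
  (fun m => bform u (S m) u) @ \oo --> p ->
  (fun m => bform u (S m) w) @ \oo --> o ->
  (fun m => bform w (S m) w) @ \oo --> r ->
  S @ \oo --> p *: (u *m u^T) + o *: (u *m w^T + w *m u^T) + r *: (w *m w^T).
Proof.
move=> ST Suu Suw Sww; rewrite (funext (fun m => sym_mx_basisE (ST m))).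
by apply: cvgD; [apply: cvgD|]; apply: cvgZr_tmp.
Qed.

Section TraceOneProjections.
Variable Q : nat -> 'M[R]_2.
Hypotheses (QQ : forall m, Q m * Q m = Q m) (QT : forall m, (Q m)^T = Q m)
  (trQ : forall m, \tr (Q m) = 1).

Lemma bform_proj_basis_bounds m :
  0 <= bform u (Q m) u <= 1 /\ 0 <= bform w (Q m) w <= 1.
Proof.
have := bform_basis_trace (Q m); rewrite trQ.
have := bform_orth_proj_ge0 (QQ m) (QT m) u; have := bform_orth_proj_ge0 (QQ m) (QT m) w.
by move=> ww uu sum1; split; apply/andP; split; lra.
Qed.

Lemma normr_bform_proj_le1 m : `|bform u (Q m) w| <= 1.
Proof.
have [/andP[uu0 uu1] /andP[ww0 ww1]] := bform_proj_basis_bounds m.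
have cs := bform_orth_proj_cs (QQ m) (QT m) u w.
by rewrite -(expr_le1 (n := 2)) ?normr_ge0 // real_normK ?num_real //; nra.
Qed.

Lemma cvg_spectral2_scalar (a b : nat -> R) (l : R) : a @ \oo --> l -> b @ \oo --> l ->
  (fun m => spectral2 (a m) (b m) (Q m)) @ \oo --> l%:M.
Proof.
move=> al bl.
have -> : l%:M = l *: (u *m u^T) + 0 *: (u *m w^T + w *m u^T) + l *: (w *m w^T).
  by rewrite scale0r addr0 -scalerDr orthonormal_outer_sum // scalemx1.
apply: cvg_sym_mx_basis => [m|||]; first exact: spectral2_tr.
- under eq_fun do rewrite bform_spectral2 unitv_dot //.
  by apply: cvg_convex_comb => // m; have [] := bform_proj_basis_bounds m.
- under eq_fun do rewrite bform_spectral2 uw sub0r mulrN -mulrBl.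
  apply: cvg0_mul_bounded; last exact: normr_bform_proj_le1.
  by rewrite -(subrr l); apply: cvgB.
- under eq_fun do rewrite bform_spectral2 unitv_dot //.
  by apply: cvg_convex_comb => // m; have [] := bform_proj_basis_bounds m.
Qed.

Lemma cvg_spectral2_rank1 (a b : nat -> R) (la nu : R) : a @ \oo --> la -> b @ \oo --> nu ->
  (fun m => bform u (Q m) w) @ \oo --> 0 -> (fun m => bform w (Q m) w) @ \oo --> 0 ->
  (fun m => spectral2 (a m) (b m) (Q m)) @ \oo --> la *: (u *m u^T) + nu *: (w *m w^T).
Proof.
move=> ala bnu Quw0 Qww0.
have Quu1 : (fun m => bform u (Q m) u) @ \oo --> (1 : R).
  have -> : (fun m => bform u (Q m) u) = (fun m => 1 - bform w (Q m) w).
    by apply/funext => m; rewrite -(trQ m) -bform_basis_trace addrK.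
  by rewrite -[X in _ --> X]subr0; apply: cvgB => //; exact: cvg_cst.
have coord (q : nat -> R) d ql : q @ \oo --> ql ->
    (fun m => a m * q m + b m * (d - q m)) @ \oo --> la * ql + nu * (d - ql).
  by move=> qql; apply: cvgD; apply: cvgM => //; apply: cvgB => //; exact: cvg_cst.
rewrite -[la *: _ + _](addr0 _) -(scale0r (u *m w^T + w *m u^T)) addrAC.
apply: cvg_sym_mx_basis => [m|||]; first exact: spectral2_tr.
- under eq_fun do rewrite bform_spectral2 unitv_dot //.
  by have := coord _ 1 _ Quu1; rewrite subrr mulr0 addr0 mulr1.
- under eq_fun do rewrite bform_spectral2 uw.
  by have := coord _ 0 _ Quw0; rewrite subrr !mulr0 addr0.
- under eq_fun do rewrite bform_spectral2 unitv_dot //.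
  by have := coord _ 1 _ Qww0; rewrite subr0 mulr0 mulr1 add0r.
Qed.
End TraceOneProjections.
End OrthonormalBasis.

Lemma ler_sum_card (R : numDomainType) (I : finType) (g : I -> R) (B : R) :
  (forall i, g i <= B) -> \sum_i g i <= #|I|%:R * B.
Proof. by move=> gB; rewrite mulr_natl -sumr_const; apply: ler_sum => i _; exact: gB. Qed.

(** * The log-exp supremum *)

Section LogExpSupremum.
Variables (R : realType) (n : nat) (X : 'I_n.+1 -> 'M[R]_2) (lam mu : 'I_n.+1 -> R)
  (u v : 'I_n.+1 -> 'cV[R]_2) (w : 'cV[R]_2).
Hypotheses (X_sym : forall i, (X i)^T = X i)
  (uv_orthonormal : forall i, unitv (u i) /\ unitv (v i) /\ (u i)^T *m v i = 0)
  (mu_le_lam : forall i, mu i <= lam i)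
  (X_spectral : forall i, X i = lam i *: (u i *m (u i)^T) + mu i *: (v i *m (v i)^T))
  (lam_le_lam1 : forall i, lam i <= lam ord0)
  (w1 : unitv w) (u1w : (u ord0)^T *m w = 0).

Local Notation Eig := ('I_n.+1 * bool)%type.
Local Notation val := (eig_val lam mu).
Local Notation vec := (eig_vec u v).
Local Notation lam1 := (lam ord0).
Local Notation u1 := (u ord0).
Local Notation mu_s := (mu_star lam mu u v ord0).
Local Notation top := ((ord0, true) : Eig).
Local Notation e m t := (expR (m%:R * t)).
Local Notation N := (#|{: Eig}|%:R : R).

Definition top_eig_double : Prop :=
  ~~ unique_eig lam mu lam1 /\ exists2 z, Vsup X lam1 z & ~~ aligned z u1.

Lemma vec_unit k : unitv (vec k).
Proof. by case: k => i [] /=; have [? [? ?]] := uv_orthonormal i. Qed.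

Lemma u1_unit : unitv u1.
Proof. exact: vec_unit top. Qed.

Lemma u1w_dot : dot u1 w = 0.
Proof. exact: orth_dot. Qed.

Lemma val_le_lam1 k : val k <= lam1.
Proof. by case: k => i []; [exact: lam_le_lam1 | exact: le_trans (mu_le_lam i) _]. Qed.

Lemma X_vec k : X k.1 *m vec k = val k *: vec k.
Proof.
case: k => i b; have [u_1 [v_1 uv]] := uv_orthonormal i; have vu := orth_sym uv.
rewrite X_spectral mulmxDl -!scalemxAl -!mulmxA.
by case: b => /=; rewrite ?u_1 ?v_1 ?uv ?vu ?mulmx1 ?mulmx0 ?scaler0 ?addr0 ?add0r.
Qed.

Lemma not_aligned_neq_top k : ~~ aligned (vec k) u1 -> k != top.
Proof. by apply: contra => /eqP ->; exact: aligned_refl. Qed.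

Lemma v1_not_aligned : ~~ aligned (vec (ord0, false)) u1.
Proof.
apply/negP => /aligned_cross2 cr0; have [u_1 [v_1 uv]] := uv_orthonormal ord0.
move: (cross2_lagrange v_1 u_1); rewrite cr0 dotC (orth_dot uv) !expr0n /= subr0.
by move/eqP; rewrite eq_sym oner_eq0.
Qed.

Lemma mu_star_ge k : ~~ aligned (vec k) u1 -> val k <= mu_s.
Proof. by move=> nk; apply: le_bigmax_cond; rewrite (not_aligned_neq_top nk). Qed.

Lemma mu_star_attained : exists k, val k = mu_s /\ ~~ aligned (vec k) u1.
Proof.
pose P x := exists k, val k = x /\ ~~ aligned (vec k) u1.
apply: (big_ind P); first by exists (ord0, false); split => //; exact: v1_not_aligned.
- by move=> x y Px Py; rewrite /Num.max; case: ifP.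
- by move=> k /andP[_ nk]; exists k.
Qed.

Lemma mu_star_le_lam1 : mu_s <= lam1.
Proof. by have [k [<- _]] := mu_star_attained; exact: val_le_lam1. Qed.

(* [z] is a combination of [u i] and [v i], and only those of them with eigenvalue
   [lam1] can have a nonzero coefficient. *)
Lemma Vsup_aligned z : Vsup X lam1 z ->
  (forall k, val k = lam1 -> aligned (vec k) u1) -> aligned z u1.
Proof.
move=> [z1 [i Xz]] top_aligned; have [u_1 [v_1 uv]] := uv_orthonormal i.
have coord_cross b : dot (vec (i, b)) z * cross2 (vec (i, b)) u1 = 0.
  have [Ev|Ev] := eqVneq (val (i, b)) lam1.
    by rewrite (aligned_cross2 (top_aligned _ Ev)) mulr0.
  move: (sym_eigvec_orth (X_sym i) (X_vec (i, b)) Xz) => /eqP.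
  by rewrite mulf_eq0 subr_eq0 (negbTE Ev) => /eqP ->; rewrite mul0r.
apply: cross2_eq0_aligned => //; first exact: u1_unit.
rewrite (orthonormal_decomp z u_1 v_1 (orth_dot uv)) cross2DZl.
by rewrite (coord_cross true) (coord_cross false) addr0.
Qed.

Lemma top_eig_doubleE : top_eig_double <-> mu_s = lam1.
Proof.
split.
- move=> [_ [z Vz nz]]; apply/eqP; rewrite eq_le mu_star_le_lam1 /=.
  have [k [vk nk]] : exists k, val k = lam1 /\ ~~ aligned (vec k) u1.
    apply: contrapT => H; move/negP: nz; apply; apply: Vsup_aligned => // k vk.
    by apply: contrapT => /negP nk; apply: H; exists k.
  by rewrite -vk mu_star_ge.
- move=> mu_lam; have [k [vk nk]] := mu_star_attained; rewrite mu_lam in vk.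
  split; last first.
    by exists (vec k) => //; split; [exact: vec_unit | exists k.1; rewrite X_vec vk].
  rewrite /unique_eig; apply/negP => /eqP card1.
  have : [set k; top]%SET \subset [set k | val k == lam1]%SET.
    by apply/fintype.subsetP => x; rewrite !inE => /orP[]/eqP ->; rewrite ?vk eqxx.
  move=> /subset_leq_card; rewrite cards2 (not_aligned_neq_top nk).
  suff -> : #|[set k | val k == lam1]%SET| = #|[set k | val k == lam1]| by rewrite card1.
  by apply: eq_card => x; rewrite [in LHS]inE; apply/idP/idP; rewrite in_setE.
Qed.

Definition weight m k : R := e m (val k).
Definition Asum m : 'M[R]_2 := outer_sum (weight m) vec.

Lemma sum_expm_Asum m : \sum_i expm (m%:R *: X i) = Asum m.
Proof.
rewrite /Asum /outer_sum -(pair_big xpredT xpredT (fun i b =>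
  weight m (i, b) *: (vec (i, b) *m (vec (i, b))^T))) /=.
apply: eq_bigr => i _; rewrite big_bool /=.
have [u_1 [v_1 uv]] := uv_orthonormal i.
have vvE : v i *m (v i)^T = 1 - u i *m (u i)^T.
  by rewrite -(orthonormal_outer_sum u_1 v_1 (orth_dot uv)) addrAC subrr add0r.
by rewrite X_spectral vvE -/(spectral2 _ _ _) scale_spectral2 expm_spectral2 ?outer_idem.
Qed.

Lemma weight_le m k : weight m k <= e m lam1.
Proof. by rewrite ler_expR ler_wpM2l ?val_le_lam1. Qed.

Lemma weight_le_mu_star m k : ~~ aligned (vec k) u1 -> weight m k <= e m mu_s.
Proof. by move=> nk; rewrite ler_expR ler_wpM2l ?mu_star_ge. Qed.

Lemma mxtrace_Asum_bounds m : e m lam1 <= \tr (Asum m) <= N * e m lam1.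
Proof.
rewrite mxtrace_outer_sum_unit; last exact: vec_unit.
apply/andP; split.
  by rewrite (bigD1 top) //= lerDl sumr_ge0 // => k _; exact: ltW (expR_gt0 _).
by apply: ler_sum_card => k; exact: weight_le.
Qed.

(* A pair of eigenvectors aligned with [u1] has zero cross product; any other pair
   has a weight at most [e m mu_s]. *)
Lemma weight_cross2_le m k l :
  weight m k * weight m l * cross2 (vec k) (vec l) ^+ 2 <= e m lam1 * e m mu_s.
Proof.
have w_ge0 j : 0 <= weight m j by exact: ltW (expR_gt0 _).
have cr_le := cross2_sqr_le1 (vec_unit k) (vec_unit l).
have bound a b A B : 0 <= a -> 0 <= b -> a <= A -> b <= B ->
    a * b * cross2 (vec k) (vec l) ^+ 2 <= A * B.
  move=> a0 b0 aA bB; apply: le_trans (ler_pM _ _ aA bB); rewrite ?mulr_ge0 //.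
  by rewrite ler_piMr ?mulr_ge0.
have [ak|nk] := boolP (aligned (vec k) u1); have [al|nl] := boolP (aligned (vec l) u1).
- by rewrite (aligned2_cross2 ak al) expr0n /= mulr0 mulr_ge0 ?expR_ge0.
- by apply: bound; rewrite ?weight_le ?weight_le_mu_star.
- by rewrite [_ * e m mu_s]mulrC; apply: bound; rewrite ?weight_le ?weight_le_mu_star.
- by apply: bound; rewrite ?weight_le ?weight_le_mu_star.
Qed.

Lemma det_Asum_upper m : \det (Asum m) *+ 2 <= N * (N * (e m lam1 * e m mu_s)).
Proof.
rewrite /Asum det_outer_sum.
apply: ler_sum_card => k; apply: ler_sum_card => l.
exact: weight_cross2_le.
Qed.

Lemma det_Asum_lower : exists2 c, 0 < c & forall m, c * (e m lam1 * e m mu_s) <= \det (Asum m).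
Proof.
have [k [vk nk]] := mu_star_attained.
(* the term of the pair ([u1], an eigenvector for [mu_s]) *)
exists (cross2 u1 (vec k) ^+ 2 / 2).
  rewrite divr_gt0 // lt_def sqr_ge0 andbT sqrf_eq0; apply: contra nk => /eqP cr0.
  by apply: aligned_sym; apply: cross2_eq0_aligned => //; [exact: u1_unit | exact: vec_unit].
move=> m.
pose g k l := weight m k * weight m l * cross2 (vec k) (vec l) ^+ 2.
have g_ge0 k' l : 0 <= g k' l.
  exact: mulr_ge0 (mulr_ge0 (expR_ge0 _) (expR_ge0 _)) (sqr_ge0 _).
have pair_le : g top k <= \det (Asum m) *+ 2.
  rewrite /Asum det_outer_sum (bigD1 top) //= -[g top k]addr0 lerD //; last first.
    by apply: sumr_ge0 => i _; apply: sumr_ge0 => j _; exact: g_ge0.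
  by rewrite (bigD1 k) //= lerDl sumr_ge0 // => j _; exact: g_ge0.
have : e m lam1 * e m mu_s * cross2 u1 (vec k) ^+ 2 <= \det (Asum m) *+ 2.
  by rewrite -vk; exact: pair_le.
rewrite -mulr_natr; lra.
Qed.

Definition eigendata (m : nat) (t : R * R * 'M[R]_2) : Prop :=
  [/\ t.2 * t.2 = t.2, t.2^T = t.2, \tr t.2 = 1, Asum m = spectral2 t.1.1 t.1.2 t.2 &
      [/\ t.1.1 + t.1.2 = \tr (Asum m), t.1.1 * t.1.2 = \det (Asum m) & t.1.2 <= t.1.1]].

Definition Aeig m := xget (0, 0, 0) (eigendata m).
Definition alpha m := (Aeig m).1.1.
Definition beta m := (Aeig m).1.2.
Definition proj m := (Aeig m).2.

Lemma AeigP m : eigendata m (Aeig m).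
Proof.
have [a [b [P spec]]] := sym_mx2_spectral (outer_sum_tr (weight m) vec).
exact: (xgetI (0, 0, 0) (spec : eigendata m (a, b, P))).
Qed.

Lemma proj_idem m : proj m * proj m = proj m. Proof. by case: (AeigP m). Qed.
Lemma proj_sym m : (proj m)^T = proj m. Proof. by case: (AeigP m). Qed.
Lemma proj_trace m : \tr (proj m) = 1. Proof. by case: (AeigP m). Qed.
Lemma Asum_spectral2 m : Asum m = spectral2 (alpha m) (beta m) (proj m).
Proof. by case: (AeigP m). Qed.

Lemma alpha_beta_bounds m :
  [/\ e m lam1 / 2 <= alpha m <= N * e m lam1, 0 < beta m & beta m <= alpha m].
Proof.
have [_ _ _ _ [sum_ab prod_ab ba]] := AeigP m.
rewrite -/(alpha m) -/(beta m) in sum_ab prod_ab ba.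
have /andP[tr_lo tr_up] := mxtrace_Asum_bounds m; rewrite -sum_ab in tr_lo tr_up.
have [c c_gt0 det_lo] := det_Asum_lower; have := det_lo m; rewrite -prod_ab => ab_lo.
have E_gt0 : 0 < e m lam1 * e m mu_s by rewrite mulr_gt0 ?expR_gt0.
have ab_gt0 : 0 < alpha m * beta m by apply: lt_le_trans ab_lo; rewrite mulr_gt0.
have b_gt0 : 0 < beta m by move: ab_gt0 (expR_gt0 (m%:R * lam1)); nra.
by split => //; apply/andP; split; lra.
Qed.

Lemma card_Eig_gt0 : 0 < N.
Proof. by rewrite ltr0n; apply/card_gt0P; exists top. Qed.

Lemma beta_bounds : exists2 c, 0 < c &
  forall m, c * e m mu_s <= beta m <= N ^+ 2 * e m mu_s.
Proof.
have [c c_gt0 det_lo] := det_Asum_lower; have N_gt0 := card_Eig_gt0.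
exists (c / N) => [|m]; first by rewrite divr_gt0.
have [_ _ _ _ [_ prod_ab _]] := AeigP m; rewrite -/(alpha m) -/(beta m) in prod_ab.
have [/andP[a_lo a_up] b_gt0 _] := alpha_beta_bounds m.
have := det_Asum_upper m; have := det_lo m; rewrite -prod_ab mulr2n.
have El_gt0 := expR_gt0 (m%:R * lam1); have Em_gt0 := expR_gt0 (m%:R * mu_s).
move: (e m lam1) (e m mu_s) El_gt0 Em_gt0 a_lo a_up => El Em El_gt0 Em_gt0 a_lo a_up lo up.
apply/andP; split.
  by rewrite mulrAC ler_pdivrMr // -(ler_pM2l El_gt0); nra.
by rewrite -(ler_pM2l El_gt0); nra.
Qed.

Lemma cvg_alpha_rate : (fun m => (m%:R)^-1 * ln (alpha m)) @ \oo --> lam1.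
Proof.
apply: (@cvg_ln_rate _ _ _ 2^-1 N) => [|m]; first by rewrite invr_gt0.
by have [lo_up _ _] := alpha_beta_bounds m; rewrite mulrC.
Qed.

Lemma cvg_beta_rate : (fun m => (m%:R)^-1 * ln (beta m)) @ \oo --> mu_s.
Proof. by have [c c_gt0 bounds] := beta_bounds; exact: cvg_ln_rate c_gt0 bounds. Qed.

Lemma supLE_seq_spectral2 : supLE_seq X =
  (fun m => spectral2 ((m%:R)^-1 * ln (alpha m)) ((m%:R)^-1 * ln (beta m)) (proj m)).
Proof.
apply/funext => m; rewrite /supLE_seq sum_expm_Asum Asum_spectral2 logm_spectral2.
- by rewrite scale_spectral2.
- exact: proj_idem.
- exact: proj_sym.
- by have [_ b_gt0 ba] := alpha_beta_bounds m; exact: lt_le_trans ba.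
- by have [] := alpha_beta_bounds m.
Qed.

Lemma supLE_cvg_double : top_eig_double -> supLE_seq X @ \oo --> lam1%:M.
Proof.
move=> /top_eig_doubleE mu_lam; rewrite supLE_seq_spectral2.
apply: (cvg_spectral2_scalar u1_unit w1 u1w_dot proj_idem proj_sym proj_trace).
  exact: cvg_alpha_rate.
by rewrite -mu_lam; exact: cvg_beta_rate.
Qed.

Section SimpleTop.
Hypothesis simple : ~ top_eig_double.

Let r := expR (mu_s - lam1).

Lemma mu_star_lt_lam1 : mu_s < lam1.
Proof. by rewrite lt_neqAle mu_star_le_lam1 andbT; apply/eqP => /top_eig_doubleE. Qed.

Lemma ratio_bounds : 0 <= r < 1.
Proof. by rewrite expR_ge0 /= -expR0 ltr_expR subr_lt0 mu_star_lt_lam1. Qed.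

Lemma exp_mu_star m : e m mu_s = e m lam1 * r ^+ m.
Proof. by rewrite /r -expRM_natl -expRD -mulrDr addrC subrK. Qed.

Lemma normr_bform_Asum_le x m : unitv x -> `|bform x (Asum m) w| <= N * e m mu_s.
Proof.
move=> x1; rewrite /Asum bform_outer_sum; apply: le_trans (ler_norm_sum _ _ _) _.
apply: ler_sum_card => k; rewrite normrM ger0_norm ?expR_ge0 //.
have [ak|nk] := boolP (aligned (vec k) u1).
  by rewrite [dot (vec k) w](aligned_dot ak u1w_dot) mulr0 normr0 mulr0 expR_ge0.
rewrite -[X in _ <= X]mulr1; apply: ler_pM; rewrite ?expR_ge0 ?normr_ge0 //.
  exact: weight_le_mu_star.
rewrite normrM -[X in _ <= X]mulr1; apply: ler_pM; rewrite ?normr_ge0 //.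
  exact: normr_dot_le1 (vec_unit k).
by rewrite dotC; exact: normr_dot_le1 (vec_unit k).
Qed.

Lemma spectral_gap : \forall m \near \oo, e m lam1 / 4 <= alpha m - beta m.
Proof.
have [c c_gt0 beta_le] := beta_bounds; have N_gt0 := card_Eig_gt0.
have /andP[r_ge0 r_lt1] := ratio_bounds.
have r0 : (fun m => r ^+ m) @ \oo --> 0 by apply: cvg_expr; rewrite ger0_norm.
have small : \forall m \near \oo, r ^+ m <= 1 / (4 * N ^+ 2).
  by apply: (cvgr_le _ r0); rewrite divr_gt0 ?mulr_gt0 ?exprn_gt0.
near=> m.
have [/andP[a_lo _] _ _] := alpha_beta_bounds m.
have /andP[_ b_up] := beta_le m; rewrite exp_mu_star in b_up.
have rm : r ^+ m <= 1 / (4 * N ^+ 2) by near: m.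
have El_gt0 := expR_gt0 (m%:R * lam1); have N2_gt0 : 0 < N ^+ 2 by rewrite exprn_gt0.
have : N ^+ 2 * r ^+ m <= 1 / 4.
  have -> : 1 / 4 = N ^+ 2 * (1 / (4 * N ^+ 2)) :> R.
    by field; rewrite gt_eqF.
  by rewrite ler_pM2l.
by move: (e m lam1) El_gt0 a_lo b_up => El El_gt0 a_lo b_up; nra.
Unshelve. all: end_near. Qed.

Lemma proj_coords_le : \forall m \near \oo,
  `|bform u1 (proj m) w| <= 4 * N * r ^+ m /\ `|bform w (proj m) w| <= 4 * N * r ^+ m.
Proof.
near=> m.
have gap : e m lam1 / 4 <= alpha m - beta m by near: m; exact: spectral_gap.
have El_gt0 := expR_gt0 (m%:R * lam1); have [_ b_gt0 _] := alpha_beta_bounds m.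
have from_gap t : 0 <= t -> (alpha m - beta m) * t <= N * (e m lam1 * r ^+ m) ->
    t <= 4 * N * r ^+ m.
  by move=> t_ge0 le_t; rewrite -(ler_pM2l El_gt0); nra.
have Auw := normr_bform_Asum_le m u1_unit; have Aww := normr_bform_Asum_le m w1.
rewrite exp_mu_star Asum_spectral2 !bform_spectral2 u1w_dot unitv_dot // in Auw Aww.
have qww_ge0 := bform_orth_proj_ge0 (proj_idem m) (proj_sym m) w.
split; apply: from_gap; rewrite ?normr_ge0 //.
  rewrite -(ger0_norm (ltW (lt_le_trans _ gap))) ?divr_gt0 // -normrM.
  by move: Auw; congr (`|_| <= _); ring.
rewrite ger0_norm //; apply: le_trans (le_trans (ler_norm _) Aww).
lra.
Unshelve. all: end_near. Qed.

Lemma supLE_cvg_simple :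
  supLE_seq X @ \oo --> lam1 *: (u1 *m u1^T) + mu_s *: (w *m w^T).
Proof.
rewrite supLE_seq_spectral2.
apply: (cvg_spectral2_rank1 u1_unit w1 u1w_dot proj_sym proj_trace
  cvg_alpha_rate cvg_beta_rate).
- apply: (cvg0_geometric_bound ratio_bounds).
  exact: filterS (fun m (h : _ /\ _) => h.1) proj_coords_le.
- apply: (cvg0_geometric_bound ratio_bounds).
  exact: filterS (fun m (h : _ /\ _) => h.2) proj_coords_le.
Qed.
End SimpleTop.
End LogExpSupremum.

Unset Implicit Arguments.

Theorem corollary1 (R : realType) (n : nat)
  (X : 'I_n.+1 -> 'M[R]_2) (lam mu : 'I_n.+1 -> R) (u v : 'I_n.+1 -> 'cV[R]_2)
  (w : 'cV[R]_2) :
  (forall i, (X i)^T = X i) ->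
  (forall i, unitv (u i) /\ unitv (v i) /\ (u i)^T *m v i = 0) ->
  (forall i, mu i <= lam i) ->
  (forall i, X i = lam i *: (u i *m (u i)^T) + mu i *: (v i *m (v i)^T)) ->
  (forall i, lam i <= lam ord0) ->
  unitv w -> (u ord0)^T *m w = 0 ->
  let lam1 := lam ord0 in
  let u1 := u ord0 in
  let cond := ~~ unique_eig lam mu lam1 /\
              exists2 z, Vsup X lam1 z & ~~ aligned z u1 in
  (cond -> supLE_seq X @ \oo --> lam1%:M) /\
  (~ cond -> supLE_seq X @ \oo -->
      lam1 *: (u1 *m u1^T) + mu_star lam mu u v ord0 *: (w *m w^T)).
Proof.
move=> X_sym uv1 mu_le X_spec lam_le w1 u1w lam1 u1 cond; split.
- exact: (supLE_cvg_double X_sym uv1 mu_le X_spec lam_le w1 u1w).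
- exact: (supLE_cvg_simple X_sym uv1 mu_le X_spec lam_le w1 u1w).
Qed.
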